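(* Assume that for each $k$ and each $x\in\mathrm{supp}(\hat{\mathsf p}_k)$ we have $\hat\pi_j(x)=0$ for all $j\neq k$ (in particular the $\hat{\mathsf p}_k$ have mutually disjoint supports), and let $\epsilon_k=D_{KL}(\hat{\mathsf p}_k\,\|\,\hat\pi_k)<\infty$. Consider any static gate in $\mathcal G_1$, i.e. $g(x,k)=w_k$ independent of $x$ (equivalently $w\in\Delta$), with model $\pi_w=\sum_kw_k\hat\pi_k$. Then $$\max_{k\in[1,p]}D_{KL}(\hat{\mathsf p}_k\,\|\,\pi_w)\ \ge\ \log\Big(\sum_{j=1}^pe^{\epsilon_j}\Big).$$
   Context: Fix an integer $p\ge 1$, $[1,p]=\{1,\dots,p\}$, $\Delta=\{\lambda\in\mathbb R^p:\lambda_k\ge 0,\ \sum_k\lambda_k=1\}$. Let $\hat{\mathsf p}_1,\dots,\hat{\mathsf p}_p$ be probability distributions with finite supports, $\mathcal X_0=\bigcup_k\mathrm{supp}(\hat{\mathsf p}_k)$, and $\hat\pi_1,\dots,\hat\pi_p$ probability distributions on $\mathcal X_0$. A gate is $g:\mathcal X_0\times[1,p]\to[0,1]$ with $\sum_kg(x,k)=1$ for each $x$; $\pi_g(x)=\sum_kg(x,k)\hat\pi_k(x)$, $Z_g=\sum_{x\in\mathcal X_0}\pi_g(x)$, $\mathcal G_1=\{g:Z_g=1\}$. $D_{KL}(P\|Q)=\sum_xP(x)\log\frac{P(x)}{Q(x)}\in[0,\infty]$ with conventions $0\log\frac0q=0$, $a\log\frac a0=+\infty$ for $a>0$. *)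

From HB Require Import structures.
From mathcomp Require Import all_boot all_order all_algebra.
From mathcomp Require Import all_classical all_reals all_analysis.
Set Implicit Arguments. Unset Strict Implicit. Unset Printing Implicit Defensive.
Import Order.TTheory GRing.Theory Num.Theory.
Local Open Scope ring_scope.

Definition is_dist (R : realType) (T : finType) (f : T -> R) : Prop :=
  (forall x, 0 <= f x) /\ \sum_(x : T) f x = 1.

Definition KL_term (R : realType) (a q : R) : \bar R :=
  if a == 0 then 0%E
  else if q == 0 then +oo%E
  else (a * ln (a / q))%:E.

Definition KL (R : realType) (T : finType) (P Q : T -> R) : \bar R :=
  (\sum_(x : T) KL_term (P x) (Q x))%E.

Definition mix (R : realType) (T : finType) (p : nat) (w : 'I_p -> R)
  (Pi : 'I_p -> T -> R) : T -> R := fun x => \sum_(k < p) w k * Pi k x.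

From HB Require Import structures.
From mathcomp Require Import all_boot all_order all_algebra.
From mathcomp Require Import all_classical all_reals all_analysis.
Import Order.TTheory GRing.Theory Num.Theory.
Set Implicit Arguments. Unset Strict Implicit. Unset Printing Implicit Defensive.
Local Open Scope ring_scope.

(* Since the supports are disjoint, on supp(P_k) the mixture is w_k Pi_k, so
   KL(P_k || pi_w) = eps_k - ln w_k (or +oo when w_k = 0).  Writing
   S = sum_j exp eps_j, the weights w_k and exp eps_k / S both sum to 1, so
   some k has w_k <= exp eps_k / S, i.e. KL(P_k || pi_w) >= ln S. *)

Section KLFinite.
Variables (R : realType) (T : finType).
Implicit Types (P Q : T -> R).

Definition KLr P Q : R :=
  \sum_x (if P x == 0 then 0 else P x * ln (P x / Q x)).

Lemma KL_term_neq_ninfty (a q : R) : KL_term a q != -oo%E.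
Proof. by rewrite /KL_term; case: ifP => //; case: ifP. Qed.

Lemma KL_pinfty P Q x : P x != 0 -> Q x = 0 -> KL P Q = +oo%E.
Proof.
move=> Px Qx; rewrite /KL (bigD1 x) //= {1}/KL_term (negbTE Px) Qx eqxx.
apply: addye; apply: (big_ind (fun y : \bar R => y != -oo%E)) => //.
- by move=> [a| |] [b| |].
- by move=> y _; exact: KL_term_neq_ninfty.
Qed.

Lemma KL_lt_pinfty_support P Q : (KL P Q < +oo)%E ->
  forall x, P x != 0 -> Q x != 0.
Proof.
move=> KLfin x Px; apply/eqP => Qx.
by move: KLfin; rewrite (KL_pinfty Px Qx) ltxx.
Qed.

Lemma KLEr P Q : (forall x, P x != 0 -> Q x != 0) -> KL P Q = (KLr P Q)%:E.
Proof.
move=> PQ; rewrite /KL /KLr -sumEFin; apply: eq_bigr => x _.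
by rewrite /KL_term; case: ifPn => // /PQ /negbTE ->.
Qed.

Lemma KLr_scaler P Q Q' (c : R) : is_dist P -> 0 < c ->
  (forall x, P x != 0 -> 0 < Q x) ->
  (forall x, P x != 0 -> Q' x = c * Q x) ->
  KLr P Q' = KLr P Q - ln c.
Proof.
move=> [P_ge0 P_sum1] c_gt0 Q_gt0 Q'E.
have -> : ln c = \sum_x P x * ln c by rewrite -mulr_suml P_sum1 mul1r.
rewrite /KLr -sumrB; apply: eq_bigr => x _.
case: ifPn => [/eqP -> | Px]; first by rewrite mul0r subr0.
have Px_gt0 : 0 < P x by rewrite lt0r Px P_ge0.
rewrite Q'E // invfM mulrCA [ln (_ * (_ / _))]lnM ?posrE ?invr_gt0 ?divr_gt0 ?Q_gt0 //.
by rewrite lnV ?posrE // mulrDr mulrN addrC.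
Qed.

Lemma dist_support_neq0 P : is_dist P -> exists x, P x != 0.
Proof.
move=> [_ P_sum1]; apply/not_existsP => P0.
have := P_sum1; rewrite big1 => [/eqP|x _]; first by rewrite eq_sym oner_eq0.
by apply/eqP/negPn/negP; exact: P0.
Qed.

End KLFinite.

Lemma exists_weight_le (R : realFieldType) (I : finType) (w a : I -> R) :
  \sum_k w k = 1 -> exists k, w k * \sum_j a j <= a k.
Proof.
move=> w_sum1; apply/not_existsP => hlt.
have [k0 _] : exists k0 : I, true.
  apply/not_existsP => none; move: w_sum1.
  by rewrite big_pred0 => [/eqP|k]; [rewrite eq_sym oner_eq0 | have := none k].
have : \sum_j a j < \sum_j a j.
  rewrite -[ltRHS]mul1r -w_sum1 mulr_suml.
  apply: ltr_sum; first by apply/hasP; exists k0; rewrite ?mem_index_enum.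
  by move=> k _; rewrite ltNge; apply/negP; exact: hlt.
by rewrite ltxx.
Qed.

Section DisjointMixture.
Variables (R : realType) (T : finType) (p : nat).
Variables (P Pi : 'I_p -> T -> R) (w : 'I_p -> R).
Hypothesis hdisj : forall (k j : 'I_p) (x : T), P k x != 0 -> j != k -> Pi j x = 0.

Lemma mix_disjoint_support k x : P k x != 0 -> mix w Pi x = w k * Pi k x.
Proof.
move=> Px; rewrite /mix (bigD1 k) //= big1 ?addr0 // => j jk.
by rewrite (hdisj Px jk) mulr0.
Qed.

Lemma KL_mix_disjoint_w0 k : is_dist (P k) -> w k = 0 ->
  KL (P k) (mix w Pi) = +oo%E.
Proof.
move=> /dist_support_neq0 [x Px] wk0.
by apply: (KL_pinfty Px); rewrite (mix_disjoint_support Px) wk0 mul0r.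
Qed.

Lemma KL_mix_disjoint k : is_dist (P k) -> is_dist (Pi k) ->
  (KL (P k) (Pi k) < +oo)%E -> 0 < w k ->
  KL (P k) (mix w Pi) = (KLr (P k) (Pi k) - ln (w k))%:E.
Proof.
move=> Pk [Pik_ge0 _] KLfin wk_gt0.
have supp := KL_lt_pinfty_support KLfin.
have Pik_gt0 x : P k x != 0 -> 0 < Pi k x.
  by move=> Px; rewrite lt0r (supp x Px) Pik_ge0.
have mix_neq0 x : P k x != 0 -> mix w Pi x != 0.
  by move=> Px; rewrite (mix_disjoint_support Px) mulf_neq0 ?(supp x Px) // gt_eqF.
by rewrite (KLEr mix_neq0) (KLr_scaler Pk wk_gt0 Pik_gt0) // => x /mix_disjoint_support.
Qed.

End DisjointMixture.

Theorem mainTheorem4 (R : realType) (T : finType) (p : nat) (hp : (0 < p)%N)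
  (P Pi : 'I_p -> T -> R)
  (hP : forall k, is_dist (P k))
  (hPi : forall k, is_dist (Pi k))
  (hX0 : forall x : T, exists k, P k x != 0)
  (hdisj : forall (k j : 'I_p) (x : T), P k x != 0 -> j != k -> Pi j x = 0)
  (heps : forall k, (KL (P k) (Pi k) < +oo)%E)
  (w : 'I_p -> R) (hw0 : forall k, 0 <= w k) (hw1 : \sum_(k < p) w k = 1) :
  ((ln (\sum_(j < p) expR (fine (KL (P j) (Pi j)))))%:E
     <= \big[Order.max/-oo]_(k < p) KL (P k) (mix w Pi))%E.
Proof.
have epsE j : fine (KL (P j) (Pi j)) = KLr (P j) (Pi j).
  by rewrite KLEr //; exact: KL_lt_pinfty_support.
under eq_bigr => j _ do rewrite epsE.
have [k wkS] := exists_weight_le (fun j => expR (KLr (P j) (Pi j))) hw1.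
set S := \sum_(j < p) _ in wkS *.
have S_gt0 : 0 < S.
  rewrite /S (bigD1 (Ordinal hp)) //= ltr_pwDl ?expR_gt0 //.
  by apply: sumr_ge0 => j _; exact/ltW/expR_gt0.
apply: (le_trans _ (le_bigmax _ _ k)).
have [wk0|wk_neq0] := eqVneq (w k) 0.
  by rewrite (KL_mix_disjoint_w0 hdisj (hP k) wk0) leey.
have wk_gt0 : 0 < w k by rewrite lt0r wk_neq0 hw0.
rewrite (KL_mix_disjoint hdisj (hP k) (hPi k) (heps k) wk_gt0) lee_fin lerBrDr.
rewrite addrC -lnM ?posrE // -ler_expR lnK.
  exact wkS.
by rewrite posrE mulr_gt0.
Qed.
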